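(* Let $n \ge 1$ and let $\vec x_{1,\text{pred}},\dots,\vec x_{n,\text{pred}} \in \mathbb{R}^3$ and $\vec x_{1,\text{gt}},\dots,\vec x_{n,\text{gt}} \in \mathbb{R}^3$ be two ordered families of points (predicted and ground-truth atom positions). Define $$\text{PM}_{\text{atom}}^2 = \frac{1}{n^2}\sum_{i=1}^{n}\sum_{j=1}^{n}\Big(\lVert \vec x_{i,\text{pred}}-\vec x_{j,\text{pred}}\rVert - \lVert \vec x_{i,\text{gt}}-\vec x_{j,\text{gt}}\rVert\Big)^2,\qquad \text{RMSD}_{\text{atom}}^2 = \frac{1}{n}\sum_{i=1}^{n}\lVert \vec x_{i,\text{pred}}-\vec x_{i,\text{gt}}\rVert^2,$$ where $\lVert\cdot\rVert$ is the Euclidean norm. Then $\text{PM}_{\text{atom}}^2 \le 2\,\text{RMSD}_{\text{atom}}^2$. *)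

From mathcomp Require Import all_boot all_order all_algebra.
From mathcomp Require Import reals.
Set Implicit Arguments. Unset Strict Implicit. Unset Printing Implicit Defensive.
Import Order.TTheory GRing.Theory Num.Theory.
Local Open Scope ring_scope.

Definition enorm (R : realType) (v : 'rV[R]_3) : R :=
  Num.sqrt (\sum_(k < 3) v 0 k ^+ 2).

Definition PM_atom_sq (R : realType) (n : nat) (xp xg : 'I_n -> 'rV[R]_3) : R :=
  (n%:R ^+ 2)^-1 *
  \sum_(i < n) \sum_(j < n)
     (enorm (xp i - xp j) - enorm (xg i - xg j)) ^+ 2.

Definition RMSD_atom_sq (R : realType) (n : nat) (xp xg : 'I_n -> 'rV[R]_3) : R :=
  (n%:R)^-1 * \sum_(i < n) enorm (xp i - xg i) ^+ 2.

From mathcomp Require Import all_boot all_order all_algebra.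
From mathcomp Require Import reals.
From mathcomp Require Import ring.
Import Order.TTheory GRing.Theory Num.Theory.
Local Open Scope ring_scope.

(* Both halves of the argument are Lagrange's identity.  With [v = 1] it says
   that the pairwise squared differences of reals [x_i] sum to
   [2 n sum x_i^2 - 2 (sum x_i)^2 <= 2 n sum x_i^2]; applied coordinatewise to
   the displacements [d_i = xp_i - xg_i] this bounds the sum of the
   [|d_i - d_j|^2] by [2 n] times the sum of the [|d_i|^2].  In general it
   gives Cauchy-Schwarz, hence the reverse triangle inequality
   [| |a| - |b| | <= |a - b|], which bounds each term of PM by
   [|(xp_i - xp_j) - (xg_i - xg_j)|^2 = |d_i - d_j|^2]. *)

Lemma lagrange_identity {R : comNzRingType} {I : finType} (u v : I -> R) :
  \sum_i \sum_j (u i * v j - u j * v i) ^+ 2 =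
  2 * ((\sum_i u i ^+ 2) * (\sum_i v i ^+ 2) - (\sum_i u i * v i) ^+ 2).
Proof.
have sum_mul (a b : I -> R) :
    \sum_i \sum_j a i * b j = (\sum_i a i) * (\sum_j b j).
  by rewrite big_distrl; apply: eq_bigr => i _; rewrite big_distrr.
transitivity (\sum_i \sum_j
  (u i ^+ 2 * v j ^+ 2 + v i ^+ 2 * u j ^+ 2 - u i * v i * (2 * (u j * v j)))).
  by apply: eq_bigr => i _; apply: eq_bigr => j _; ring.
under eq_bigr do rewrite sumrB big_split.
rewrite sumrB big_split /= !sum_mul -mulr_sumr.
ring.
Qed.

Lemma cauchy_schwarz {R : realDomainType} {I : finType} (u v : I -> R) :
  (\sum_i u i * v i) ^+ 2 <= (\sum_i u i ^+ 2) * (\sum_i v i ^+ 2).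
Proof.
rewrite -subr_ge0 -(pmulr_rge0 _ (ltr0n R 2)) -lagrange_identity.
by do 2!apply: sumr_ge0 => ? _; apply: sqr_ge0.
Qed.

Lemma sum_sqr_diff_le {R : realDomainType} {I : finType} (x : I -> R) :
  \sum_i \sum_j (x i - x j) ^+ 2 <= 2 * #|I|%:R * \sum_i x i ^+ 2.
Proof.
have := lagrange_identity x (fun=> 1).
under eq_bigr do under eq_bigr do rewrite !mulr1.
under [\sum_i 1 ^+ 2]eq_bigr do rewrite expr1n.
under [\sum_i x i * 1]eq_bigr do rewrite mulr1.
rewrite sumr_const => ->.
rewrite mulrBr lerBlDr.
by rewrite [X in 2 * X <= _]mulrC mulrA lerDl mulr_ge0 ?sqr_ge0.
Qed.

Lemma enorm_sqr {R : realType} (v : 'rV[R]_3) :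
  enorm v ^+ 2 = \sum_k v 0 k ^+ 2.
Proof. by rewrite sqr_sqrtr // sumr_ge0 // => k _; apply: sqr_ge0. Qed.

Lemma enorm_sqrB {R : realType} (a b : 'rV[R]_3) :
  enorm (a - b) ^+ 2 =
  enorm a ^+ 2 + enorm b ^+ 2 - 2 * \sum_k a 0 k * b 0 k.
Proof.
rewrite !enorm_sqr mulr_sumr -big_split -sumrB /=.
by apply: eq_bigr => k _; rewrite !mxE; ring.
Qed.

Lemma enorm_cauchy_schwarz {R : realType} (a b : 'rV[R]_3) :
  \sum_k a 0 k * b 0 k <= enorm a * enorm b.
Proof.
apply: le_trans (ler_norm _) _.
rewrite -sqrtr_sqr /enorm -sqrtrM ?sumr_ge0 // => [|k _]; last exact: sqr_ge0.
by rewrite ler_wsqrtr // cauchy_schwarz.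
Qed.

Lemma ler_sqr_dist_dist_enorm {R : realType} (a b : 'rV[R]_3) :
  (enorm a - enorm b) ^+ 2 <= enorm (a - b) ^+ 2.
Proof.
rewrite enorm_sqrB sqrrB addrAC -mulr_natl lerD2l lerN2.
by rewrite ler_wpM2l ?enorm_cauchy_schwarz.
Qed.

Lemma sum_enorm_sqr_diff_le {R : realType} {I : finType} (d : I -> 'rV[R]_3) :
  \sum_i \sum_j enorm (d i - d j) ^+ 2 <= 2 * #|I|%:R * \sum_i enorm (d i) ^+ 2.
Proof.
under eq_bigr => i _.
  under eq_bigr do rewrite enorm_sqr.
  rewrite exchange_big; over.
under [\sum_i enorm _ ^+ 2]eq_bigr do rewrite enorm_sqr.
rewrite exchange_big [X in _ <= _ * X]exchange_big /= mulr_sumr.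
apply: ler_sum => k _; under eq_bigr do under eq_bigr do rewrite !mxE.
exact: sum_sqr_diff_le.
Qed.

Theorem theorem1 (R : realType) (n : nat) (hn : (1 <= n)%N)
  (xp xg : 'I_n -> 'rV[R]_3) :
  PM_atom_sq xp xg <= 2 * RMSD_atom_sq xp xg.
Proof.
pose d i := xp i - xg i.
have termwise_le : \sum_i \sum_j (enorm (xp i - xp j) - enorm (xg i - xg j)) ^+ 2
    <= \sum_i \sum_j enorm (d i - d j) ^+ 2.
  apply: ler_sum => i _; apply: ler_sum => j _.
  apply: le_trans (ler_sqr_dist_dist_enorm _ _) _.
  by rewrite !opprD !opprK addrACA.
have := sum_enorm_sqr_diff_le d; rewrite card_ord => pairwise_le.
have n_gt0 : 0 < n%:R :> R by rewrite ltr0n.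
rewrite /PM_atom_sq /RMSD_atom_sq.
apply: le_trans (ler_wpM2l _ (le_trans termwise_le pairwise_le)) _.
  by rewrite invr_ge0 exprn_ge0 ?ltW.
by rewrite mulrCA mulrA expr2 invfM -!mulrA mulVKf ?gt_eqF.
Qed.
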